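(* Let $n\ge2$, $r\ge1$, and let $\mathbf Z_\vartriangle(n,r)\subseteq\mathrm{End}_{\mathbb Q(v)}(\boldsymbol\Omega^{\otimes r})$ be as in the context. Then the set $$\{\sigma_1^{\lambda_1}\cdots\sigma_{r-1}^{\lambda_{r-1}}\sigma_r^{\lambda_r}\mid \lambda_1,\dots,\lambda_{r-1}\in\mathbb N,\ \lambda_r\in\mathbb Z\}$$ is a $\mathbb Q(v)$-basis of $\mathbf Z_\vartriangle(n,r)$; in other words $\mathbf Z_\vartriangle(n,r)$ is a polynomial ring in $\sigma_1,\dots,\sigma_{r-1}$ over the Laurent polynomial ring $\mathbb Q(v)[\sigma_r,\sigma_r^{-1}]$.
   Context: $\boldsymbol\Omega$ is the $\mathbb Q(v)$-space with basis $\{\omega_s\}_{s\in\mathbb Z}$ and $\boldsymbol\Omega^{\otimes r}$ has basis $\omega_{\mathbf i}=\omega_{i_1}\otimes\cdots\otimes\omega_{i_r}$, $\mathbf i\in\mathbb Z^r$. For $1\le s\le r$ let $\phi_s$ be the invertible linear map $\omega_{\mathbf i}\mapsto\omega_{\mathbf i-n\mathbf e_s}$ (subtract $n$ from the $s$-th index); the $\phi_s$ commute. Let $\sigma_s$ ($1\le s\le r$) be the $s$-th elementary symmetric polynomial in $\phi_1,\dots,\phi_r$. Let $\mathfrak p_m=\sum_{s=1}^r\phi_s^m$ and $\mathfrak q_m=\sum_{s=1}^r\phi_s^{-m}$, and let $\mathbf Z_\vartriangle(n,r)$ be the $\mathbb Q(v)$-subalgebra generated by all $\mathfrak p_m,\mathfrak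 q_m$ ($m\ge1$); it coincides with the subalgebra generated by $\sigma_1,\dots,\sigma_r,\sigma_r^{-1}$. *)

From HB Require Import structures.
From mathcomp Require Import all_boot all_order all_algebra.
From mathcomp Require Import fraction.
From mathcomp Require Import finmap.
From mathcomp.multinomials Require Import monalg.
Unset Printing Implicit Defensive.
Import Order.TTheory GRing.Theory Num.Theory.
Local Open Scope ring_scope.

Definition Qv : fieldType := {fraction {poly rat}}.

Definition idx (r : nat) := {ffun 'I_r -> int}.

(* Omega^{(x) r}: free Q(v)-module with basis omega_i, i in Z^r
   (finitely supported functions Z^r -> Q(v)); omega_i = << i >>. *)
Definition Om (r : nat) := {malg Qv[idx r]}.

Definition op (r : nat) := Om r -> Om r.

Definition shift r (c : int) (s : 'I_r) (i : idx r) : idx r :=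
  [ffun k => i k + (if k == s then c else 0)].

Definition on_basis r (f : idx r -> idx r) : op r :=
  fun x => \sum_(i <- msupp x) x@_i *: << f i >>.

Definition phi n r (s : 'I_r) : op r := on_basis r (shift r (- (n%:Z)) s).
Definition phi_inv n r (s : 'I_r) : op r := on_basis r (shift r (n%:Z) s).

Definition op_add r (f g : op r) : op r := fun x => f x + g x.
Definition op_scale r (c : Qv) (f : op r) : op r := fun x => c *: f x.

(* composition of the phi_s, s in S (they commute, so the order is irrelevant) *)
Definition phi_set n r (S : {set 'I_r}) : op r :=
  foldr (fun s f => phi n r s \o f) id (enum S).

Definition sigma n r (k : nat) : op r :=
  fun x => \sum_(S : {set 'I_r} | #|S| == k) phi_set n r S x.

Definition sigma_r_inv n r : op r :=
  foldr (fun s f => phi_inv n r s \o f) id (enum 'I_r).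

Definition sigma_r_pow n r (z : int) : op r :=
  match z with
  | Posz k => iter k (sigma n r r)
  | Negz k => iter k.+1 (sigma_r_inv n r)
  end.

Definition pm n r (m : nat) : op r := fun x => \sum_(s < r) iter m (phi n r s) x.
Definition qm n r (m : nat) : op r := fun x => \sum_(s < r) iter m (phi_inv n r s) x.

(* Z_Delta(n,r): the Q(v)-subalgebra of End(Omega^{(x) r}) generated by
   all p_m, q_m (m >= 1). *)
Inductive inZ n r : op r -> Prop :=
| inZ_one : inZ n r (@id (Om r))
| inZ_p m : (0 < m)%N -> inZ n r (pm n r m)
| inZ_q m : (0 < m)%N -> inZ n r (qm n r m)
| inZ_add f g : inZ n r f -> inZ n r g -> inZ n r (op_add r f g)
| inZ_scale c f : inZ n r f -> inZ n r (op_scale r c f)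
| inZ_comp f g : inZ n r f -> inZ n r g -> inZ n r (f \o g).

Definition lam (r : nat) := ({ffun 'I_r.-1 -> nat} * int)%type.

Definition mono n r (l : lam r) : op r :=
  foldr (fun i f => iter (l.1 i) (sigma n r (nat_of_ord i).+1) \o f)
        (sigma_r_pow n r l.2) (enum 'I_r.-1).

From HB Require Import structures.
From mathcomp Require Import all_boot all_order all_algebra.
From mathcomp Require Import fraction ring zify perm.
From mathcomp Require Import finmap.
From mathcomp.multinomials Require Import monalg.
From mathcomp.multinomials Require mpoly.
From Stdlib Require Import FunctionalExtensionality.
Set Implicit Arguments. Unset Strict Implicit.
Unset Printing Implicit Defensive.
Import Order.TTheory GRing.Theory Num.Theory.
Local Open Scope ring_scope.

(* Identify Omega^(x)r with the group algebra Q(v)[Z^r] of Laurent polynomials.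
   Then phi_s is multiplication by the monomial Y_s = omega_(-n e_s), so every
   operator in sight is multiplication by a Laurent polynomial in the Y_s, and
   sigma_k is multiplication by e_k(Y).  Newton's identities express e_k(Y)
   through the power sums p_m, and sigma_r^-1 = e_r(Y^-1) through the q_m, so
   the monomials lie in Z.  Conversely p_m is symmetric in the Y_s and
   q_m = sigma_r^-m * (a symmetric polynomial), so by the fundamental theorem
   on symmetric polynomials every element of Z is a combination of monomials.
   Finally, a vanishing combination of monomials, multiplied by a large power
   of sigma_r, is a polynomial relation among e_1(Y), ..., e_r(Y); the
   evaluation X_s |-> Y_s is injective because n > 0, and the elementary
   symmetric polynomials are algebraically independent, so the relation is
   trivial. *)

Lemma monalgUZ (K : choiceType) (R : nzRingType) (c : R) (k : K) :
  << c *g k >> = c *: (<< k >> : {malg R[K]}).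
Proof. by apply/malgP => j; rewrite mcoeffZ !mcoeffU mulr_natr. Qed.

Section LinearExtension.
Variables (r : nat) (V : lmodType Qv).
Implicit Types (a b : Om r) (F G : idx r -> V).

Definition lin_ext F a : V := \sum_(k <- msupp a) a@_k *: F k.

Lemma lin_extEw F a (D : {fset idx r}) : (msupp a `<=` D)%fset ->
  lin_ext F a = \sum_(k <- D) a@_k *: F k.
Proof.
move=> le_aD; rewrite /lin_ext (big_fset_incl _ le_aD) // => k _ /mcoeff_outdom ->.
by rewrite scale0r.
Qed.

Lemma eq_lin_ext F G : F =1 G -> lin_ext F =1 lin_ext G.
Proof. by move=> eqFG a; apply: eq_bigr => k _; rewrite eqFG. Qed.

Lemma lin_extD F a b : lin_ext F (a + b) = lin_ext F a + lin_ext F b.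
Proof.
pose D := (msupp a `|` msupp b `|` msupp (a + b))%fset.
have subD c : c \in [:: a; b; a + b] -> (msupp c `<=` D)%fset.
  by rewrite !inE => /or3P[] /eqP-> ; apply/fsubsetP => k kc; rewrite !inE kc ?orbT.
rewrite !(@lin_extEw F _ D) ?subD ?inE ?eqxx ?orbT // -big_split /=.
by apply: eq_bigr => k _; rewrite mcoeffD scalerDl.
Qed.

Lemma lin_extZ F c a : lin_ext F (c *: a) = c *: lin_ext F a.
Proof.
rewrite (@lin_extEw F _ (msupp a)) ?msuppZ_le // /lin_ext scaler_sumr.
by apply: eq_bigr => k _; rewrite mcoeffZ scalerA.
Qed.

Lemma lin_extU F k : lin_ext F << k >> = F k.
Proof. by rewrite /lin_ext msuppU oner_eq0 big_seq_fset1 mcoeffUU scale1r. Qed.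

Lemma eq_lin_on_basis (G1 G2 : Om r -> V) :
  {morph G1 : a b / a + b} -> (forall c, {morph G1 : a / c *: a}) ->
  {morph G2 : a b / a + b} -> (forall c, {morph G2 : a / c *: a}) ->
  (forall k, G1 << k >> = G2 << k >>) -> G1 =1 G2.
Proof.
move=> G1D G1Z G2D G2Z eqG a; rewrite [a]monalgE.
elim: (enum_fset (msupp a)) => [|k s IH].
  by rewrite big_nil -(scale0r 0) G1Z G2Z !scale0r.
by rewrite big_cons G1D G2D IH monalgUZ G1Z G2Z eqG.
Qed.

End LinearExtension.

Lemma lin_ext_monalgU r (a : Om r) : lin_ext (fun k => << k >>) a = a.
Proof.
rewrite {2}[a]monalgE /lin_ext; apply: eq_bigr => k _.
by rewrite [RHS]monalgUZ.
Qed.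

Section GroupAlgebra.
Variable r : nat.
Implicit Types (a b c : Om r) (i j k : idx r).

Definition malg_mul0 a b : Om r :=
  lin_ext (fun k => lin_ext (fun j => << k + j >>) b) a.
Fact malg_mul_key : unit. Proof. exact: tt. Qed.
Definition malg_mul := locked_with malg_mul_key malg_mul0.
Lemma malg_mulE : malg_mul = malg_mul0. Proof. exact: unlock. Qed.

Lemma malg_mulUU k j : malg_mul << k >> << j >> = << k + j >>.
Proof. by rewrite malg_mulE /malg_mul0 !lin_extU. Qed.

Lemma malg_mulDl a b c : malg_mul (a + b) c = malg_mul a c + malg_mul b c.
Proof. by rewrite malg_mulE; apply: lin_extD. Qed.

Lemma malg_mulZl x a b : malg_mul (x *: a) b = x *: malg_mul a b.
Proof. by rewrite malg_mulE; apply: lin_extZ. Qed.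

Lemma malg_mulC a b : malg_mul a b = malg_mul b a.
Proof.
have swap : malg_mul a b = lin_ext (fun j => lin_ext (fun k => << k + j >>) a) b.
  rewrite malg_mulE /malg_mul0 /lin_ext.
  under eq_bigr => k _ do rewrite scaler_sumr.
  rewrite exchange_big /=; apply: eq_bigr => j _.
  by rewrite scaler_sumr; apply: eq_bigr => k _; rewrite !scalerA mulrC.
rewrite swap malg_mulE; apply: eq_lin_ext => j; apply: eq_lin_ext => k.
by rewrite addrC.
Qed.

Lemma malg_mulDr a b c : malg_mul a (b + c) = malg_mul a b + malg_mul a c.
Proof. by rewrite !(malg_mulC a) malg_mulDl. Qed.

Lemma malg_mulZr x a b : malg_mul a (x *: b) = x *: malg_mul a b.
Proof. by rewrite !(malg_mulC a) malg_mulZl. Qed.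

Lemma malg_mul1 a : malg_mul << 0 >> a = a.
Proof.
rewrite malg_mulE /malg_mul0 lin_extU -[RHS]lin_ext_monalgU.
by apply: eq_lin_ext => k; rewrite add0r.
Qed.

Lemma malg_mulA a b c : malg_mul a (malg_mul b c) = malg_mul (malg_mul a b) c.
Proof.
move: a; apply: eq_lin_on_basis => [x y|x y|x y|x y|k].
- by rewrite malg_mulDl.
- by rewrite malg_mulZl.
- by rewrite !malg_mulDl.
- by rewrite !malg_mulZl.
move: b; apply: eq_lin_on_basis => [x y|x y|x y|x y|j].
- by rewrite malg_mulDl malg_mulDr.
- by rewrite malg_mulZl malg_mulZr.
- by rewrite malg_mulDr malg_mulDl.
- by rewrite malg_mulZr malg_mulZl.
move: c; apply: eq_lin_on_basis => [x y|x y|x y|x y|i].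
- by rewrite !malg_mulDr.
- by rewrite !malg_mulZr.
- by rewrite !malg_mulDr.
- by rewrite !malg_mulZr.
by rewrite !malg_mulUU addrA.
Qed.

Lemma malgU0_neq0 : (<< 0 >> : Om r) != 0.
Proof. by rewrite monalgU_eq0 oner_eq0. Qed.

End GroupAlgebra.

Definition laurent r := Om r.
HB.instance Definition _ r := GRing.Lmodule.on (laurent r).
HB.instance Definition _ r := GRing.Zmodule_isComNzRing.Build (laurent r)
  (@malg_mulA r) (@malg_mulC r) (@malg_mul1 r) (@malg_mulDl r) (@malgU0_neq0 r).
HB.instance Definition _ r := GRing.Lmodule_isLalgebra.Build Qv (laurent r)
  (fun x a b => esym (@malg_mulZl r x a b)).
HB.instance Definition _ r := GRing.Lalgebra_isComAlgebra.Build Qv (laurent r).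

Lemma laurentUM r (k j : idx r) : (<< k >> : laurent r) * << j >> = << k + j >>.
Proof. exact: malg_mulUU. Qed.

Lemma laurentUX r (k : idx r) m : (<< k >> : laurent r) ^+ m = << k *+ m >>.
Proof.
elim: m => [|m IH]; first by rewrite expr0 mulr0n.
by rewrite exprS IH laurentUM mulrS.
Qed.

Lemma laurentU_prod r (I : Type) (s : seq I) (F : I -> idx r) :
  \prod_(i <- s) (<< F i >> : laurent r) = << \sum_(i <- s) F i >>.
Proof.
elim: s => [|i s IH]; first by rewrite !big_nil.
by rewrite !big_cons IH laurentUM.
Qed.

Section NewtonIdentities.
Variables (R : comNzRingType) (r : nat) (x : 'I_r -> R).

Definition esym k : R := \sum_(S : {set 'I_r} | #|S| == k) \prod_(i in S) x i.
Definition esym_off s k : R :=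
  \sum_(S : {set 'I_r} | (#|S| == k) && (s \notin S)) \prod_(i in S) x i.
Definition psum m : R := \sum_(i < r) x i ^+ m.

Lemma esym0 : esym 0 = 1.
Proof. by rewrite /esym (big_pred1 set0) ?big_set0 // => S; rewrite cards_eq0. Qed.

Lemma esym_off0 s : esym_off s 0 = 1.
Proof.
rewrite /esym_off (big_pred1 set0) ?big_set0 // => S.
by rewrite cards_eq0 /=; case: eqP => [->|] //=; rewrite inE.
Qed.

Lemma esym_full : esym r = \prod_(i < r) x i.
Proof.
rewrite /esym (big_pred1 [set: 'I_r]); last first.
  move=> S /=; rewrite eqEcard subsetT cardsT card_ord /=.
  apply/eqP/idP => [->//|le]; apply/eqP; rewrite eqn_leq le andbT.
  by rewrite -[X in (_ <= X)%N](card_ord r) max_card.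
by apply: eq_bigl => i; rewrite inE.
Qed.

Lemma esym_mem s k :
  \sum_(S : {set 'I_r} | (#|S| == k.+1) && (s \in S)) \prod_(i in S) x i
  = x s * esym_off s k.
Proof.
rewrite (reindex_onto (fun S => s |: S) (fun S => S :\ s)); last first.
  by move=> S /andP[_ sS]; rewrite setD1K.
rewrite /esym_off mulr_sumr; apply: eq_big => [S|S /andP[_ /eqP cardS]]; last first.
  by rewrite big_setU1 //= -cardS !inE eqxx.
rewrite setU11 andbT; case sS: (s \in S) => /=.
  rewrite andbF; apply/negbTE/andP => -[_ /eqP eqS].
  by move: sS; rewrite -eqS !inE eqxx.
by rewrite andbT cardsU1 sS add1n eqSS setU1K ?sS // eqxx andbT.
Qed.

Lemma esym_split s k : esym k.+1 = esym_off s k.+1 + x s * esym_off s k.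
Proof. by rewrite /esym (bigID (fun S : {set 'I_r} => s \in S)) /= addrC esym_mem. Qed.

Lemma esym_offE s k :
  esym_off s k = \sum_(j < k.+1) (-1) ^+ j * x s ^+ j * esym (k - j)%N.
Proof.
elim: k => [|k IH]; first by rewrite big_ord1 esym_off0 esym0 !expr0 !mul1r.
rewrite -[esym_off s k.+1](addrK (x s * esym_off s k)) -esym_split IH.
rewrite [RHS]big_ord_recl /= !expr0 !mul1r subn0; congr (_ + _).
rewrite mulr_sumr -sumrN; apply: eq_bigr => j _.
by rewrite /bump /= add1n !exprS subSS; ring.
Qed.

Lemma newton_esym k :
  k.+1%:R * esym k.+1 = \sum_(j < k.+1) (-1) ^+ j * esym (k - j)%N * psum j.+1.
Proof.
have -> : k.+1%:R * esym k.+1 =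
    \sum_(S : {set 'I_r} | #|S| == k.+1) \sum_(s in S) \prod_(i in S) x i.
  by rewrite /esym mulr_sumr; apply: eq_bigr => S /eqP cardS; rewrite sumr_const cardS mulr_natl.
rewrite (exchange_big_dep predT) //=.
transitivity (\sum_(s < r) \sum_(j < k.+1) x s * ((-1) ^+ j * x s ^+ j * esym (k - j)%N)).
  apply: eq_bigr => s _; rewrite -mulr_sumr -esym_offE -esym_mem.
  by apply: eq_bigl => S; rewrite andbC.
rewrite exchange_big /=; apply: eq_bigr => j _.
by rewrite /psum mulr_sumr; apply: eq_bigr => s _; rewrite exprS; ring.
Qed.

End NewtonIdentities.

Lemma iter_mul (R : pzSemiRingType) (f : R -> R) a m x :
  (forall y, f y = a * y) -> iter m f x = a ^+ m * x.
Proof.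
move=> fE; elim: m => [|m IH] /=; first by rewrite expr0 mul1r.
by rewrite fE IH exprS mulrA.
Qed.

Section MultiplicationOperators.
Variables n r : nat.
Implicit Types (x : Om r) (a : laurent r) (s : 'I_r).

Definition mulop a : op r := fun x => a * (x : laurent r).

Lemma mulopE (f : op r) a : (forall x, f x = a * (x : laurent r)) -> f = mulop a.
Proof. by move=> fE; apply: functional_extensionality => x; rewrite fE. Qed.

Lemma on_basis_shift c s x :
  on_basis r (shift r c s) x = (<< shift r c s 0 >> : laurent r) * (x : laurent r).
Proof.
rewrite [RHS]/(_ * _) /= malg_mulE /malg_mul0 lin_extU.
apply: eq_lin_ext => i; congr << _ >>.
by apply/ffunP => k; rewrite !ffunE add0r addrC.
Qed.

Definition Y s : laurent r := << shift r (- n%:Z) s 0 >>.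
Definition Yinv s : laurent r := << shift r n%:Z s 0 >>.

Lemma mulYYinv s : Y s * Yinv s = 1.
Proof.
rewrite laurentUM; congr << _ >>.
by apply/ffunP => k; rewrite !ffunE !add0r; case: eqP; rewrite ?addNr ?addr0.
Qed.

Lemma phiE s x : phi n r s x = Y s * (x : laurent r).
Proof. exact: on_basis_shift. Qed.

Lemma phi_invE s x : phi_inv n r s x = Yinv s * (x : laurent r).
Proof. exact: on_basis_shift. Qed.

Lemma phi_setE (S : {set 'I_r}) x :
  phi_set n r S x = (\prod_(s in S) Y s) * (x : laurent r).
Proof.
rewrite /phi_set -big_enum /=; elim: (enum S) => [|s l IH] /=.
  by rewrite big_nil mul1r.
by rewrite big_cons phiE IH mulrA.
Qed.

Lemma sigmaE k x : sigma n r k x = esym Y k * (x : laurent r).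
Proof. by rewrite /sigma /esym mulr_suml; apply: eq_bigr => S _; apply: phi_setE. Qed.

Lemma sigma_r_invE x : sigma_r_inv n r x = esym Yinv r * (x : laurent r).
Proof.
rewrite esym_full /sigma_r_inv -big_enum /=; elim: (enum _) => [|s l IH] /=.
  by rewrite big_nil mul1r.
by rewrite big_cons phi_invE IH mulrA.
Qed.

Definition sigma_r_powL (z : int) : laurent r :=
  match z with Posz k => esym Y r ^+ k | Negz k => esym Yinv r ^+ k.+1 end.

Lemma sigma_r_powE z x : sigma_r_pow n r z x = sigma_r_powL z * (x : laurent r).
Proof.
by case: z => k; rewrite /sigma_r_pow /sigma_r_powL; apply: (@iter_mul (laurent r)) => y;
  [apply: sigmaE | apply: sigma_r_invE].
Qed.

Definition monoL (l : lam r) : laurent r :=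
  (\prod_(i <- enum 'I_r.-1) esym Y i.+1 ^+ l.1 i) * sigma_r_powL l.2.

Lemma monoE l x : mono n r l x = monoL l * (x : laurent r).
Proof.
rewrite /mono /monoL; elim: (enum _) => [|i s IH] /=.
  by rewrite big_nil mul1r sigma_r_powE.
by rewrite big_cons (@iter_mul (laurent r) _ _ _ _ (sigmaE _)) IH !mulrA.
Qed.

Lemma pmE m x : pm n r m x = psum Y m * (x : laurent r).
Proof.
by rewrite /pm /psum mulr_suml; apply: eq_bigr => s _; apply: (@iter_mul (laurent r)) => y; apply: phiE.
Qed.

Lemma qmE m x : qm n r m x = psum Yinv m * (x : laurent r).
Proof.
by rewrite /qm /psum mulr_suml; apply: eq_bigr => s _; apply: (@iter_mul (laurent r)) => y; apply: phi_invE.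
Qed.

End MultiplicationOperators.

Lemma Qv_natS_neq0 k : (k.+1%:R : Qv) != 0.
Proof.
have -> : (k.+1%:R : Qv) = FracField.tofrac (k.+1%:R : {poly rat}) by rewrite rmorph_nat.
by rewrite tofrac_eq -polyC_natr polyC_eq0 pnatr_eq0.
Qed.

Section Membership.
Variables n r : nat.
Implicit Types a b : laurent r.

Definition inZL a := inZ n r (mulop a).

Lemma inZL1 : inZL 1.
Proof.
rewrite /inZL -(mulopE (f := id)); first exact: inZ_one.
by move=> x; rewrite mul1r.
Qed.

Lemma inZLD a b : inZL a -> inZL b -> inZL (a + b).
Proof.
move=> Ha Hb; rewrite /inZL -(mulopE (f := op_add r (mulop a) (mulop b))).
  exact: inZ_add.
by move=> x; rewrite /op_add /mulop mulrDl.
Qed.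

Lemma inZLZ c a : inZL a -> inZL (c *: a).
Proof.
move=> Ha; rewrite /inZL -(mulopE (f := op_scale r c (mulop a))); first exact: inZ_scale.
by move=> x; rewrite /op_scale /mulop -scalerAl.
Qed.

Lemma inZLM a b : inZL a -> inZL b -> inZL (a * b).
Proof.
move=> Ha Hb; rewrite /inZL -(mulopE (f := mulop a \o mulop b)); first exact: inZ_comp.
by move=> x; rewrite /mulop /= mulrA.
Qed.

Lemma inZLX a k : inZL a -> inZL (a ^+ k).
Proof.
by move=> Ha; elim: k => [|k IH]; rewrite ?expr0 ?exprS; [apply: inZL1 | apply: inZLM].
Qed.

Lemma inZL_sum (I : Type) (s : seq I) (F : I -> laurent r) :
  (forall i, inZL (F i)) -> inZL (\sum_(i <- s) F i).
Proof.
move=> HF; elim: s => [|i s IH]; last by rewrite big_cons; apply: inZLD.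
by rewrite big_nil -(scale0r 1); apply/inZLZ/inZL1.
Qed.

Lemma inZL_prod (I : Type) (s : seq I) (F : I -> laurent r) :
  (forall i, inZL (F i)) -> inZL (\prod_(i <- s) F i).
Proof.
move=> HF; elim: s => [|i s IH]; last by rewrite big_cons; apply: inZLM.
by rewrite big_nil; apply: inZL1.
Qed.

Lemma inZL_esym (x : 'I_r -> laurent r) :
  (forall m, (0 < m)%N -> inZL (psum x m)) -> forall k, inZL (esym x k).
Proof.
move=> Hp; elim/ltn_ind => -[_|k IH]; first by rewrite esym0; apply: inZL1.
have -> : esym x k.+1 = (k.+1%:R : Qv)^-1 *: (k.+1%:R * esym x k.+1).
  by rewrite mulr_natl -scaler_nat scalerA mulVf ?Qv_natS_neq0 // scale1r.
apply: inZLZ; rewrite newton_esym; apply: inZL_sum => j.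
apply: inZLM; last exact: Hp.
apply: inZLM; last by apply/IH/leq_subr.
by apply: inZLX; rewrite -scaleN1r; apply/inZLZ/inZL1.
Qed.

Lemma inZL_esymY k : inZL (esym (@Y n r) k).
Proof. by apply: inZL_esym => m m_gt0; rewrite /inZL -(mulopE (pmE n m)); apply: inZ_p. Qed.

Lemma inZL_esymYinv k : inZL (esym (@Yinv n r) k).
Proof. by apply: inZL_esym => m m_gt0; rewrite /inZL -(mulopE (qmE n m)); apply: inZ_q. Qed.

Lemma inZL_monoL l : inZL (monoL n l).
Proof.
apply: inZLM; first by apply: inZL_prod => i; apply/inZLX/inZL_esymY.
by case: l.2 => k; apply: inZLX; [apply: inZL_esymY | apply: inZL_esymYinv].
Qed.

End Membership.

Lemma mono_inZ n r l : inZ n r (mono n r l).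
Proof. by rewrite (mulopE (monoE n l)); apply: inZL_monoL. Qed.

Section MonomialSpan.
Variables n r : nat.
Local Notation Y := (@Y n r).
Local Notation Yinv := (@Yinv n r).
Local Notation sigma_r_powL := (@sigma_r_powL n r).
Local Notation monoL := (@monoL n r).

Lemma esym_Y_Yinv : esym Y r * esym Yinv r = 1.
Proof. by rewrite !esym_full -big_split big1 // => s _; apply: mulYYinv. Qed.

Lemma sigma_r_powL_sub (a b : nat) :
  sigma_r_powL (a%:Z - b%:Z) = esym Y r ^+ a * esym Yinv r ^+ b.
Proof.
have [le_ba|lt_ab] := leqP b a.
  rewrite subzn //= -{2}(subnK le_ba) exprD -mulrA -exprMn esym_Y_Yinv.
  by rewrite expr1n mulr1.
have -> : a%:Z - b%:Z = Negz (b - a).-1.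
  by rewrite NegzE prednK ?subn_gt0 // -opprB subzn // ltnW.
rewrite /= prednK ?subn_gt0 // -{2}(subnK (ltnW lt_ab)) exprD mulrCA -exprMn.
by rewrite esym_Y_Yinv expr1n mulr1.
Qed.

Lemma sigma_r_powLD z1 z2 : sigma_r_powL (z1 + z2) = sigma_r_powL z1 * sigma_r_powL z2.
Proof.
have int_sub z : exists a b : nat, z = a%:Z - b%:Z.
  by case: z => k; [exists k, 0%N; rewrite subr0 | exists 0%N, k.+1; rewrite NegzE sub0r].
have [a1 [b1 ->]] := int_sub z1; have [a2 [b2 ->]] := int_sub z2.
have -> : a1%:Z - b1%:Z + (a2%:Z - b2%:Z) = (a1 + a2)%N%:Z - (b1 + b2)%N%:Z.
  by rewrite !PoszD; ring.
by rewrite !sigma_r_powL_sub !exprD; ring.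
Qed.

Definition lam_add (l l' : lam r) : lam r := ([ffun i => l.1 i + l'.1 i]%N, l.2 + l'.2).

Lemma monoL_add l l' : monoL (lam_add l l') = monoL l * monoL l'.
Proof.
rewrite /monoL /= sigma_r_powLD mulrACA -big_split /=; congr (_ * _).
by apply: eq_bigr => i _; rewrite ffunE exprD.
Qed.

Inductive mono_span : laurent r -> Prop :=
| mono_span0 : mono_span 0
| mono_span_cons c l a : mono_span a -> mono_span (c *: monoL l + a).

Lemma mono_spanD a b : mono_span a -> mono_span b -> mono_span (a + b).
Proof.
by move=> + Hb; elim => [|c l v _ IH]; rewrite ?add0r // -addrA; apply: mono_span_cons.
Qed.

Lemma mono_spanZ c a : mono_span a -> mono_span (c *: a).
Proof.
elim => [|d l v _ IH]; first by rewrite scaler0; apply: mono_span0.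
by rewrite scalerDr scalerA; apply: mono_span_cons.
Qed.

Lemma mono_span_monoL l : mono_span (monoL l).
Proof. by rewrite -[monoL l]addr0 -[monoL l]scale1r; apply/mono_span_cons/mono_span0. Qed.

Lemma mono_span_sum (I : Type) (s : seq I) (F : I -> laurent r) :
  (forall i, mono_span (F i)) -> mono_span (\sum_(i <- s) F i).
Proof.
move=> HF; elim: s => [|i s IH]; first by rewrite big_nil; apply: mono_span0.
by rewrite big_cons; apply: mono_spanD.
Qed.

Lemma mono_spanM a b : mono_span a -> mono_span b -> mono_span (a * b).
Proof.
move=> Ha; elim => [|d l v _ IH]; first by rewrite mulr0; apply: mono_span0.
rewrite mulrDr -scalerAr; apply: mono_spanD => //; apply: mono_spanZ.
elim: Ha => [|c l' w _ IHw]; first by rewrite mul0r; apply: mono_span0.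
by rewrite mulrDl -scalerAl -monoL_add; apply: mono_span_cons.
Qed.

Lemma mono_span1 : mono_span 1.
Proof.
rewrite (_ : 1 = monoL ([ffun=> 0%N], 0)); first exact: mono_span_monoL.
by rewrite /monoL /= expr0 mulr1 big1 // => i _; rewrite ffunE expr0.
Qed.

Lemma mono_spanX a k : mono_span a -> mono_span (a ^+ k).
Proof.
move=> Ha; elim: k => [|k IH]; first by rewrite expr0; apply: mono_span1.
by rewrite exprS; apply: mono_spanM.
Qed.

Lemma mono_span_esym_Yinv : mono_span (esym Yinv r).
Proof.
rewrite (_ : esym Yinv r = monoL ([ffun=> 0%N], Negz 0)); first exact: mono_span_monoL.
by rewrite /monoL /= expr1 big1 ?mul1r // => i _; rewrite ffunE expr0.
Qed.

End MonomialSpan.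

Lemma sum_scale_cons (K : nzRingType) (V : lmodType K) (T : eqType) (f : T -> V)
    (s : seq T) (c : T -> K) d l : uniq s ->
  exists s' (c' : T -> K), uniq s' /\
    d *: f l + \sum_(i <- s) c i *: f i = \sum_(i <- s') c' i *: f i.
Proof.
move=> uniq_s; have [ls|lNs] := boolP (l \in s).
  exists s, (fun i => if i == l then c l + d else c i); split => //.
  rewrite (bigD1_seq l) //= [RHS](bigD1_seq l) //= eqxx scalerDl addrCA addrA.
  by congr (_ + _); apply: eq_bigr => i /negbTE ->.
exists (l :: s), (fun i => if i == l then d else c i); split; first by rewrite /= lNs.
rewrite big_cons eqxx; congr (_ + _); rewrite !big_seq; apply: eq_bigr => i i_s.
by rewrite ifN //; apply: contraNneq lNs => <-.
Qed.

Lemma mono_span_sum_repr n r (a : laurent r) : mono_span n a ->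
  exists (s : seq (lam r)) (c : lam r -> Qv), a = \sum_(l <- s) c l *: monoL n l.
Proof.
(* [s] is kept duplicate-free so that a new term merges into the coefficient function. *)
suff: mono_span n a -> exists s c, uniq s /\ a = \sum_(l <- s) c l *: monoL n l.
  by move=> /[apply] -[s [c [_ ->]]]; exists s, c.
elim => [|c l v _ [s [c' [uniq_s ->]]]]; first by exists [::], (fun _ => 0); rewrite big_nil.
exact: sum_scale_cons.
Qed.

Import mpoly.

Section SymmetricSpan.
Variables n r : nat.
Local Notation R := r.+1.
Local Notation Y := (@Y n R).
Local Notation Yinv := (@Yinv n R).
Local Notation evY := (mmap (in_alg (laurent R)) Y).
(* Here {mpoly Qv[R]} would denote monalg's cmonom-based algebra, not mpoly's type. *)
Local Notation MP := (mpoly.mpoly R Qv).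
Local Notation S := [tuple mesym R Qv i.+1 | i < R].

Lemma evYZ c (p : MP) : evY (c *: p) = c *: evY p.
Proof. by rewrite mmapZ mulr_algl. Qed.

Lemma evYX i : evY 'X_i = Y i.
Proof. by rewrite mmapX mmap1U. Qed.

Lemma evY_mesym k : evY (mesym R Qv k) = esym Y k.
Proof.
rewrite /mesym rmorph_sum /=; apply: eq_bigr => h _.
by rewrite rmorph_prod /=; apply: eq_bigr => i _; apply: evYX.
Qed.

Definition lam_of_mnm (m : 'X_{1..R}) : lam R :=
  ([ffun i : 'I_r => m (widen_ord (leqnSn r) i)], Posz (m ord_max)).

Lemma evY_comp_mesymX m : evY ('X_[m] \mPo S) = monoL n (lam_of_mnm m).
Proof.
have -> : evY ('X_[m] \mPo S) = \prod_(i < R) esym Y i.+1 ^+ m i.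
  rewrite comp_mpolyX rmorph_prod /=; apply: eq_bigr => i _.
  by rewrite rmorphXn /= tnth_mktuple evY_mesym.
rewrite /monoL /= big_ord_recr /= big_enum /=; congr (_ * _).
by apply: eq_bigr => i _; rewrite ffunE.
Qed.

Lemma mono_span_evY_sym p : p \is symmetric -> mono_span n (evY p).
Proof.
case/sym_fundamental => t [<- _]; rewrite comp_mpolyEX rmorph_sum /=.
apply: mono_span_sum => m; rewrite evYZ evY_comp_mesymX.
exact/mono_spanZ/mono_span_monoL.
Qed.

Lemma msymXi (s : {perm 'I_R}) i : msym s ('X_i : MP) = 'X_(s i).
Proof. by rewrite /msym mmapX mmap1U. Qed.

Lemma psumX_sym m : (\sum_(i < R) 'X_i ^+ m : MP) \is symmetric.
Proof.
apply/issymP => s; rewrite rmorph_sum /= [RHS](reindex_inj (@perm_inj _ s)) /=.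
by apply: eq_bigr => i _; rewrite rmorphXn /= msymXi.
Qed.

Lemma psumX_co_sym m :
  (\sum_(s < R) \prod_(t < R | t != s) 'X_t ^+ m : MP) \is symmetric.
Proof.
apply/issymP => s; rewrite rmorph_sum /= [RHS](reindex_inj (@perm_inj _ s)) /=.
apply: eq_bigr => u _; rewrite rmorph_prod /= [RHS](reindex_inj (@perm_inj _ s)) /=.
apply: eq_big => [t|t _]; first by rewrite (inj_eq (@perm_inj _ s)).
by rewrite rmorphXn /= msymXi.
Qed.

Lemma psum_YE m : psum Y m = evY (\sum_(i < R) 'X_i ^+ m).
Proof. by rewrite rmorph_sum /=; apply: eq_bigr => i _; rewrite rmorphXn /= evYX. Qed.

Lemma psum_YinvE m :
  psum Yinv m = esym Yinv R ^+ m * evY (\sum_(s < R) \prod_(t < R | t != s) 'X_t ^+ m).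
Proof.
rewrite /psum rmorph_sum /= mulr_sumr; apply: eq_bigr => s _.
rewrite rmorph_prod /= esym_full -prodrXl (bigD1 s) //= -mulrA -big_split /=.
rewrite big1 ?mulr1 // => t _.
by rewrite rmorphXn /= evYX -exprMn mulrC mulYYinv expr1n.
Qed.

Lemma inZ_mulop_span T : inZ n R T -> exists2 a, mono_span n a & T = mulop a.
Proof.
elim => [|m _|m _|f g _ [a Ha ->] _ [b Hb ->]|c f _ [a Ha ->]|f g _ [a Ha ->] _ [b Hb ->]].
- by exists 1; [apply: mono_span1 | apply: mulopE] => x; rewrite mul1r.
- exists (psum Y m); last exact: mulopE (pmE n m).
  by rewrite psum_YE; apply/mono_span_evY_sym/psumX_sym.
- exists (psum Yinv m); last exact: mulopE (qmE n m).
  rewrite psum_YinvE; apply: mono_spanM; first exact/mono_spanX/mono_span_esym_Yinv.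
  exact/mono_span_evY_sym/psumX_co_sym.
- by exists (a + b); [apply: mono_spanD | apply: mulopE => x; rewrite mulrDl].
- by exists (c *: a); [apply: mono_spanZ | apply: mulopE => x; rewrite -scalerAl].
- by exists (a * b); [apply: mono_spanM | apply: mulopE => x; rewrite /mulop /= mulrA].
Qed.

End SymmetricSpan.

Lemma sum_delta_inj (K : pzSemiRingType) (I T : eqType) (s : seq I) (c : I -> K)
    (g : I -> T) i0 : uniq s -> {in s &, injective g} -> i0 \in s ->
  \sum_(i <- s) c i * (g i == g i0)%:R = c i0.
Proof.
move=> uniq_s g_inj i0s; rewrite (bigD1_seq i0) //= eqxx mulr1.
rewrite big_seq_cond big1 ?addr0 // => i /andP[i_s neq_i].
by rewrite (eqtype.inj_in_eq g_inj) // (negbTE neq_i) mulr0.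
Qed.

Section Independence.
Variables n r : nat.
Hypothesis n_gt0 : (0 < n)%N.
Local Notation R := r.+1.
Local Notation Y := (@Y n R).
Local Notation evY := (mmap (in_alg (laurent R)) Y).
Local Notation MP := (mpoly.mpoly R Qv).
Local Notation S := [tuple mesym R Qv i.+1 | i < R].

Definition mnm_exp (m : 'X_{1..R}) : idx R := \sum_(i < R) shift R (- n%:Z) i 0 *+ m i.

Lemma mnm_expE m k : mnm_exp m k = - n%:Z *+ m k.
Proof.
rewrite /mnm_exp sum_ffunE (bigD1 k) //= big1 ?addr0 => [|i neq_ik].
  by rewrite ffunMnE !ffunE eqxx add0r.
by rewrite ffunMnE !ffunE eq_sym (negbTE neq_ik) addr0 mul0rn.
Qed.

Lemma mnm_exp_inj : injective mnm_exp.
Proof.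
have n_neq0 : - n%:Z != 0 by rewrite oppr_eq0 -lt0n.
move=> m1 m2 eq_exp; apply/mnmP => k.
have := congr1 (fun i : idx R => i k) eq_exp.
by rewrite !mnm_expE => /(mulrIn n_neq0).
Qed.

Lemma evY_expand (p : MP) : evY p = \sum_(m <- msupp p) p@_m *: << mnm_exp m >>.
Proof.
apply: eq_bigr => m _; rewrite mulr_algl; congr (_ *: _).
by rewrite /mmap1 /mnm_exp -laurentU_prod; apply: eq_bigr => i _; rewrite laurentUX.
Qed.

Lemma evY_eq0 (p : MP) : evY p = 0 -> p = 0.
Proof.
move=> evp0; apply/mpolyP => m; rewrite mcoeff0.
have [mp|] := boolP (m \in msupp p); last exact: memN_msupp_eq0.
have := congr1 (monalg.mcoeff (mnm_exp m)) evp0.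
rewrite evY_expand raddf_sum monalg.mcoeff0 /= => <-.
rewrite -(sum_delta_inj (fun m => p@_m) (msupp_uniq p) (in2W mnm_exp_inj) mp).
by apply: eq_bigr => m' _; rewrite monalg.mcoeffZ monalg.mcoeffU.
Qed.

Definition mnm_of_lam N (l : lam R) : 'X_{1..R} :=
  [multinom if unlift ord_max i is Some j then l.1 j else absz (l.2 + N%:Z)%R | i < R].

Lemma lam_of_mnm_of_lam N l : 0 <= l.2 + N%:Z ->
  lam_of_mnm (mnm_of_lam N l) = lam_add l ([ffun=> 0%N], N%:Z).
Proof.
move=> ge0; rewrite /lam_of_mnm /lam_add; congr (_, _); rewrite ?mnmE.
  apply/ffunP => i; rewrite !ffunE mnmE addn0.
  have -> : widen_ord (leqnSn r) i = lift ord_max i by apply: val_inj; rewrite [RHS]lift_max.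
  by rewrite liftK.
by rewrite unlift_none gez0_abs.
Qed.

Lemma monoL_shift N l : monoL n (lam_add l ([ffun=> 0%N], N%:Z)) = monoL n l * esym Y R ^+ N.
Proof.
rewrite monoL_add; congr (_ * _).
by rewrite /monoL /= big1 ?mul1r // => i _; rewrite ffunE expr0.
Qed.

Lemma monoL_free (s : seq (lam R)) (c : lam R -> Qv) : uniq s ->
  \sum_(l <- s) c l *: monoL n l = 0 -> forall l, l \in s -> c l = 0.
Proof.
move=> uniq_s rel0 l0 l0s; pose N := (\sum_(l <- s) `|l.2|)%N.
have N_ge l : l \in s -> 0 <= l.2 + N%:Z.
  move=> ls; have : (`|l.2| <= N)%N by rewrite /N (bigD1_seq l) //= leq_addr.
  lia.
pose m l := mnm_of_lam N l.
have evY_m l : l \in s -> evY ('X_[m l] \mPo S) = monoL n l * esym Y R ^+ N.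
  by move=> ls; rewrite evY_comp_mesymX lam_of_mnm_of_lam ?monoL_shift ?N_ge.
have m_inj : {in s &, injective m}.
  move=> l1 l2 l1s l2s /(congr1 (@lam_of_mnm r)); rewrite !lam_of_mnm_of_lam ?N_ge //.
  case: l1 l2 {l1s l2s} => [a1 b1] [a2 b2] [/ffunP eq_a /addIr ->]; congr (_, _).
  by apply/ffunP => i; have := eq_a i; rewrite !ffunE !addn0.
pose t : MP := \sum_(l <- s) c l *: 'X_[m l].
have t0 : t = 0.
  apply/msym_fundamental_un0/evY_eq0.
  rewrite /t [X in mmap _ _ X]raddf_sum raddf_sum /=.
  transitivity ((\sum_(l <- s) c l *: monoL n l) * esym Y R ^+ N); last by rewrite rel0 mul0r.
  rewrite mulr_suml big_seq [RHS]big_seq; apply: eq_bigr => l ls.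
  by rewrite comp_mpolyZ evYZ evY_m // scalerAl.
have := congr1 (mcoeff (m l0)) t0; rewrite mcoeff0 raddf_sum /= => <-.
rewrite -[LHS](sum_delta_inj c uniq_s m_inj l0s).
by apply: eq_bigr => l _; rewrite mcoeffZ mcoeffX.
Qed.

End Independence.

Theorem proposition5p2p3 (n r : nat) :
  (2 <= n)%N -> (1 <= r)%N ->
  (forall l : lam r, inZ n r (mono n r l)) /\
  (forall T : op r, inZ n r T ->
     exists (s : seq (lam r)) (c : lam r -> Qv),
       forall x : Om r, T x = \sum_(l <- s) c l *: mono n r l x) /\
  (forall (s : seq (lam r)) (c : lam r -> Qv), uniq s ->
     (forall x : Om r, \sum_(l <- s) c l *: mono n r l x = 0) ->
     forall l, l \in s -> c l = 0).
Proof.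
case: r => [//|r] n_ge2 _; split; first exact: mono_inZ.
split=> [T /inZ_mulop_span [a /mono_span_sum_repr [s [c ->]] ->]|s c uniq_s rel0].
  exists s, c => x; rewrite /mulop mulr_suml; apply: eq_bigr => l _.
  by rewrite monoE -scalerAl.
apply: (@monoL_free n r (ltnW n_ge2) s c uniq_s).
by rewrite -[RHS](rel0 (1 : laurent r.+1)); apply: eq_bigr => l _; rewrite monoE mulr1.
Qed.
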